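(* There is an absolute constant $C>0$ such that the following holds for every $n\ge2$. Let $v_i:=i$ for $i=1,\dots,n$. Then there exist $s_1,\dots,s_n\in[0,1)$ such that for every $t\in\mathbb{R}$, every $\gamma\in[0,1]$ and every sector $S$ of aperture $\gamma$, $$\big|N_S(s_1+v_1t,\dots,s_n+v_nt)-\gamma n\big|\ \le\ C\big(\sqrt{n\gamma\log n}+\log n\big).$$ Consequently $B(s_1+v_1t,\dots,s_n+v_nt)\le C'\sqrt{n\log n}$ for all $t\in\mathbb{R}$, for an absolute constant $C'$.
   Context: For $r\in\mathbb{R}$, $\{r\}:=r-\lfloor r\rfloor$. A sector of aperture $\gamma\in[0,1]$ is a set $S_{\alpha,\alpha+\gamma}:=\{x\in[0,1]:\{x-\alpha\}\le\gamma\}$ with $\alpha\in\mathbb{R}$. $N_S(x_1,\dots,x_n):=|\{i:\{x_i\}\in S\}|$. The bias is $B(r_1,\dots,r_n):=\sup_{0\le a\le b\le1}\big|\,|\{i:\{r_i\}\in[a,b]\}|-n(b-a)\big|$. $\log$ is base 2. *)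

From Stdlib Require Import Reals Lra Lia List Bool.
Open Scope bool_scope.
Open Scope R_scope.

(* {r} := r - floor r.  Stdlib's Int_part is the floor (up r - 1). *)
Definition frac (r : R) : R := r - IZR (Int_part r).

Definition log2 (x : R) : R := ln x / ln 2.

Definition Rleb (x y : R) : bool := if Rle_dec x y then true else false.

Definition in_sector (alpha gamma x : R) : bool :=
  Rleb 0 x && Rleb x 1 && Rleb (frac (x - alpha)) gamma.

Definition N_sector (alpha gamma : R) (n : nat) (x : nat -> R) : nat :=
  length (filter (fun i => in_sector alpha gamma (frac (x i))) (seq 1 n)).

Definition N_interval (a b : R) (n : nat) (r : nat -> R) : nat :=
  length (filter (fun i => Rleb a (frac (r i)) && Rleb (frac (r i)) b) (seq 1 n)).

(* "B(r_1,...,r_n) <= X": the supremum over 0<=a<=b<=1 of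
   | N_[a,b] - n(b-a) | is at most X, i.e. every term is at most X. *)
Definition bias_le (n : nat) (r : nat -> R) (X : R) : Prop :=
  forall a b : R, 0 <= a -> a <= b -> b <= 1 ->
    Rabs (INR (N_interval a b n r) - INR n * (b - a)) <= X.

From Stdlib Require Import Reals List.
From Stdlib Require Import Lra Lia ZArith.
Open Scope R_scope.

(* Proof of Theorem 4.1 by the probabilistic method, with offsets on a grid.

   Take [K = n^2] and offsets [s_i = k_i / K] with [k_i] in [0..K-1].  Scaled by [K],
   the point [s_i + i t] lies within [n] to the right of the integer
   [k_i + i floor (t K)]; hence, up to [n] grid steps at each end, a sector count at
   time [t] is squeezed between counts of the [i] such that [k_i + i j] falls in an
   arc [{a, ..., a + L}] of Z/KZ, for suitable residues [j, a, L].  For a uniformly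
   random tuple [k] such a count is a sum of [n] independent Bernoulli variables of
   mean [(L+1)/K]; a Chernoff bound with an optimized tilt and a union bound over
   the [K^3] triples [(j, a, L)] show that some tuple keeps every count within
   [O (sqrt (mean * log n) + log n)] of its mean.  Finally an interval count is a
   sector count up to the points at [0], which gives the bias bound. *)

Fixpoint sum_lt (K : nat) (f : nat -> R) : R :=
  match K with O => 0 | S K' => sum_lt K' f + f K' end.

Lemma sum_lt_ext K f g : (forall x, (x < K)%nat -> f x = g x) -> sum_lt K f = sum_lt K g.
Proof.
  induction K as [|K IH]; simpl; intros H; auto.
  rewrite IH, H by (try intros; auto with arith). reflexivity.
Qed.

Lemma sum_lt_le K f g : (forall x, (x < K)%nat -> f x <= g x) -> sum_lt K f <= sum_lt K g.
Proof.
  induction K as [|K IH]; simpl; intros H; [lra|].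
  assert (sum_lt K f <= sum_lt K g) by (apply IH; auto with arith).
  assert (f K <= g K) by auto with arith. lra.
Qed.

Lemma sum_lt_plus K f g : sum_lt K (fun x => f x + g x) = sum_lt K f + sum_lt K g.
Proof. induction K as [|K IH]; simpl; [lra|]. rewrite IH. lra. Qed.

Lemma sum_lt_scal K c f : sum_lt K (fun x => c * f x) = c * sum_lt K f.
Proof. induction K as [|K IH]; simpl; [lra|]. rewrite IH. lra. Qed.

Lemma sum_lt_const K c : sum_lt K (fun _ => c) = INR K * c.
Proof. induction K as [|K IH]; simpl sum_lt; [simpl; lra|]. rewrite IH, S_INR. lra. Qed.

Lemma sum_lt_swap K1 K2 f :
  sum_lt K1 (fun x => sum_lt K2 (fun y => f x y)) = sum_lt K2 (fun y => sum_lt K1 (fun x => f x y)).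
Proof.
  induction K1 as [|K1 IH]; simpl.
  - rewrite sum_lt_const. simpl. lra.
  - rewrite IH, <- sum_lt_plus. reflexivity.
Qed.

Lemma sum_lt_nonneg K f : (forall x, (x < K)%nat -> 0 <= f x) -> 0 <= sum_lt K f.
Proof.
  intros H. rewrite <- (Rmult_0_r (INR K)), <- sum_lt_const. apply sum_lt_le. exact H.
Qed.

Lemma sum_lt_term K f x0 : (forall x, (x < K)%nat -> 0 <= f x) -> (x0 < K)%nat ->
  f x0 <= sum_lt K f.
Proof.
  induction K as [|K IH]; intros Hpos Hx0; [lia|]. simpl.
  assert (0 <= sum_lt K f) by (apply sum_lt_nonneg; auto with arith).
  destruct (Nat.eq_dec x0 K) as [->|Hne]; [lra|].
  assert (f x0 <= sum_lt K f) by (apply IH; [auto with arith | lia]).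
  assert (0 <= f K) by auto with arith. lra.
Qed.

Lemma sum_lt_exists K f g : sum_lt K f < sum_lt K g -> exists x, (x < K)%nat /\ f x < g x.
Proof.
  induction K as [|K IH]; simpl; intros H; [lra|].
  destruct (Rlt_dec (sum_lt K f) (sum_lt K g)) as [Hlt|Hge].
  - destruct (IH Hlt) as [x [Hx Hfx]]. exists x. split; [lia | exact Hfx].
  - exists K. split; [lia | lra].
Qed.

Lemma sum_lt_shift K g : sum_lt K (fun x => g (S x)) = sum_lt K g - g O + g K.
Proof. induction K as [|K IH]; simpl; [lra|]. rewrite IH. lra. Qed.

Lemma sum_lt_rotate K f d : (0 < K)%nat ->
  sum_lt K (fun x => f ((x + d) mod K)%nat) = sum_lt K f.
Proof.
  intros HK. induction d as [|d IH].
  - apply sum_lt_ext. intros x Hx. rewrite Nat.add_0_r, Nat.mod_small; auto.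
  - rewrite <- IH.
    rewrite (sum_lt_ext K _ (fun x => f ((S x + d) mod K)%nat)) by (intros; do 2 f_equal; lia).
    rewrite (sum_lt_shift K (fun x => f ((x + d) mod K)%nat)).
    replace ((K + d) mod K)%nat with ((0 + d) mod K)%nat; [lra|].
    replace (K + d)%nat with (d + 1 * K)%nat by lia. rewrite Nat.Div0.mod_add. reflexivity.
Qed.

Lemma sum_lt_step K L A B : (L < K)%nat ->
  sum_lt K (fun x => if Nat.leb x L then A else B) = INR (S L) * A + INR (K - S L) * B.
Proof.
  intros H. induction K as [|K IH]; [lia|]. simpl sum_lt.
  destruct (Nat.eq_dec L K) as [->|Hne].
  - replace (S K - S K)%nat with O by lia. rewrite Nat.leb_refl.
    rewrite (sum_lt_ext K _ (fun _ => A)) by (intros x Hx; destruct (Nat.leb_spec x K); lia || auto).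
    rewrite sum_lt_const, (S_INR K). simpl INR. lra.
  - rewrite IH by lia. destruct (Nat.leb_spec K L); [lia|].
    replace (S K - S L)%nat with (S (K - S L)) by lia. rewrite (S_INR (K - S L)). lra.
Qed.

Fixpoint prod_1to (m : nat) (f : nat -> R) : R :=
  match m with O => 1 | S m' => prod_1to m' f * f (S m') end.
Fixpoint sum_1to (m : nat) (f : nat -> R) : R :=
  match m with O => 0 | S m' => sum_1to m' f + f (S m') end.

Lemma prod_1to_ext m f g : (forall i, (1 <= i <= m)%nat -> f i = g i) -> prod_1to m f = prod_1to m g.
Proof.
  induction m as [|m IH]; simpl; intros H; auto.
  rewrite IH by (intros; apply H; lia). rewrite H by lia. reflexivity.
Qed.

Lemma prod_1to_const m c : prod_1to m (fun _ => c) = c ^ m.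
Proof. induction m as [|m IH]; simpl; auto. rewrite IH. lra. Qed.

Lemma exp_sum_1to m h f : exp (h * sum_1to m f) = prod_1to m (fun i => exp (h * f i)).
Proof.
  induction m as [|m IH]; simpl.
  - rewrite Rmult_0_r, exp_0. reflexivity.
  - rewrite Rmult_plus_distr_l, exp_plus, IH. reflexivity.
Qed.

Lemma count_as_sum m (p : nat -> bool) :
  INR (length (filter p (seq 1 m))) = sum_1to m (fun i => if p i then 1 else 0).
Proof.
  induction m as [|m IH]; simpl sum_1to; auto.
  rewrite seq_S, filter_app, length_app, plus_INR, IH. simpl.
  destruct (p (S m)); simpl; lra.
Qed.

(* A function [k : nat -> nat] is read as a tuple [(k 1, ..., k m)]; [set_at k p x]
   overwrites its [p]-th coordinate. [tuple_sum K m F] sums [F k] over all [K^m]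
   tuples with coordinates in [0..K-1] (coordinates outside [1..m] are [0]). *)
Definition set_at (k : nat -> nat) (p x : nat) : nat -> nat :=
  fun i => if Nat.eqb i p then x else k i.

Fixpoint tuple_sum (K m : nat) (F : (nat -> nat) -> R) : R :=
  match m with
  | O => F (fun _ => O)
  | S m' => sum_lt K (fun x => tuple_sum K m' (fun k => F (set_at k (S m') x)))
  end.

Lemma tuple_sum_ext K m F G : (forall k, F k = G k) -> tuple_sum K m F = tuple_sum K m G.
Proof.
  revert F G; induction m as [|m IH]; simpl; intros F G H; auto.
  apply sum_lt_ext. intros; apply IH; auto.
Qed.

Lemma tuple_sum_plus K m F G :
  tuple_sum K m (fun k => F k + G k) = tuple_sum K m F + tuple_sum K m G.
Proof.
  revert F G; induction m as [|m IH]; simpl; intros F G; auto.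
  rewrite <- sum_lt_plus. apply sum_lt_ext. intros; apply IH.
Qed.

Lemma tuple_sum_scal K m c F : tuple_sum K m (fun k => c * F k) = c * tuple_sum K m F.
Proof.
  revert F; induction m as [|m IH]; simpl; intros F; auto.
  rewrite <- sum_lt_scal. apply sum_lt_ext. intros; apply IH.
Qed.

Lemma tuple_sum_const K m c : tuple_sum K m (fun _ => c) = INR K ^ m * c.
Proof. induction m as [|m IH]; simpl; [lra|]. rewrite sum_lt_const, IH. lra. Qed.

Lemma tuple_sum_swap K m E F :
  tuple_sum K m (fun k => sum_lt E (fun e => F e k)) = sum_lt E (fun e => tuple_sum K m (F e)).
Proof.
  revert F; induction m as [|m IH]; simpl; intros F; auto.
  rewrite sum_lt_swap. apply sum_lt_ext. intros; apply IH.
Qed.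

Lemma tuple_sum_exists K m F G : tuple_sum K m F < tuple_sum K m G ->
  exists k, (forall i, (1 <= i <= m)%nat -> (k i < K)%nat) /\ F k < G k.
Proof.
  revert F G; induction m as [|m IH]; simpl; intros F G H.
  - exists (fun _ => O). split; [intros; lia | exact H].
  - destruct (sum_lt_exists _ _ _ H) as [x [Hx Hlt]].
    destruct (IH _ _ Hlt) as [k [Hk HFG]].
    exists (set_at k (S m) x). split; auto.
    intros i Hi. unfold set_at. destruct (Nat.eqb_spec i (S m)); auto. apply Hk; lia.
Qed.

(* Fubini for product functions: the tuple sum of a product of one-coordinate
   factors is the product of the one-coordinate sums (independence). *)
Lemma tuple_sum_prod K m g :
  tuple_sum K m (fun k => prod_1to m (fun i => g i (k i))) = prod_1to m (fun i => sum_lt K (g i)).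
Proof.
  induction m as [|m IH]; simpl; auto.
  rewrite <- IH, <- sum_lt_scal. apply sum_lt_ext. intros x _.
  rewrite Rmult_comm, <- tuple_sum_scal. apply tuple_sum_ext. intros k.
  unfold set_at at 2. rewrite Nat.eqb_refl.
  rewrite (prod_1to_ext m _ (fun i => g i (k i))); [lra|].
  intros i Hi. unfold set_at. destruct (Nat.eqb_spec i (S m)); [lia | reflexivity].
Qed.

Lemma floor_le r : IZR (Int_part r) <= r.
Proof. apply base_Int_part. Qed.

Lemma floor_gt r : r - 1 < IZR (Int_part r).
Proof. destruct (base_Int_part r). lra. Qed.

Lemma floor_unique r z : IZR z <= r < IZR z + 1 -> Int_part r = z.
Proof.
  intros [H1 H2]. unfold Int_part. rewrite <- (tech_up r (z + 1)); [lia | |];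
  rewrite plus_IZR; simpl; lra.
Qed.

Lemma floor_ge r z : IZR z <= r -> (z <= Int_part r)%Z.
Proof.
  intros H. pose proof (floor_gt r) as Hgt.
  assert (Hz : IZR (z - 1) < IZR (Int_part r)) by (rewrite minus_IZR; lra).
  apply lt_IZR in Hz. lia.
Qed.

Lemma frac_bounds r : 0 <= frac r < 1.
Proof. unfold frac. destruct (base_Int_part r). lra. Qed.

Lemma frac_shift u N : frac (u + IZR N) = frac u.
Proof.
  unfold frac. rewrite (floor_unique (u + IZR N) (Int_part u + N)); [rewrite plus_IZR; lra|].
  rewrite plus_IZR. destruct (base_Int_part u). lra.
Qed.

Lemma frac_le u : 0 <= u -> frac u <= u.
Proof.
  intros H. assert (H0 : (0 <= Int_part u)%Z) by (apply floor_ge; simpl; lra).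
  apply IZR_le in H0. unfold frac. simpl in H0. lra.
Qed.

Lemma Rleb_true x y : Rleb x y = true <-> x <= y.
Proof. unfold Rleb. destruct (Rle_dec x y); split; intros; auto; discriminate. Qed.

Lemma in_sector_arc al ga y : 0 <= ga ->
  in_sector al ga (frac y) = true <-> exists m : Z, al + IZR m <= y <= al + ga + IZR m.
Proof.
  intros Hga. pose proof (frac_bounds y) as Hy. unfold in_sector. split.
  - intros H. apply andb_prop in H as [_ H]. apply Rleb_true in H.
    exists (Int_part y + Int_part (frac y - al))%Z. rewrite plus_IZR.
    pose proof (frac_bounds (frac y - al)). unfold frac in *. lra.
  - intros [m Hm].
    apply andb_true_intro; split; [apply andb_true_intro; split|]; apply Rleb_true; try lra.
    replace (frac y - al) with ((y - al - IZR m) + IZR (m - Int_part y))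
      by (rewrite minus_IZR; unfold frac; lra).
    rewrite frac_shift. pose proof (frac_le (y - al - IZR m)). lra.
Qed.

Lemma count_mono (l : list nat) p q : (forall x, In x l -> p x = true -> q x = true) ->
  (length (filter p l) <= length (filter q l))%nat.
Proof.
  induction l as [|a l IH]; simpl; intros H; auto.
  specialize (IH (fun x Hx => H x (or_intror Hx))).
  destruct (p a) eqn:E.
  - rewrite (H a (or_introl eq_refl) E). simpl. lia.
  - destruct (q a); simpl; lia.
Qed.

Lemma count_or (l : list nat) p q r :
  (forall x, In x l -> p x = true -> q x = true \/ r x = true) ->
  (length (filter p l) <= length (filter q l) + length (filter r l))%nat.
Proof.
  induction l as [|a l IH]; simpl; intros H; auto.
  specialize (IH (fun x Hx => H x (or_intror Hx))).
  destruct (p a) eqn:E.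
  - destruct (H a (or_introl eq_refl) E) as [E1|E1]; rewrite E1; simpl;
      [destruct (r a) | destruct (q a)]; simpl; lia.
  - destruct (q a), (r a); simpl; lia.
Qed.

Lemma count_le (l : list nat) p : (length (filter p l) <= length l)%nat.
Proof. induction l as [|a l IH]; simpl; auto. destruct (p a); simpl; lia. Qed.

Definition ind (b : bool) : R := if b then 1 else 0.

(* Discrete model on Z/KZ: the [i]-th point with offset [x] sits at [x + i j] at the
   discrete time [j], and [hit K j a L i x] says that it lies in the arc
   [{a, a+1, ..., a+L}] (mod K).  [hits] counts the points [1..n] of the tuple [k]
   in that arc, and [mean n K L] is its average over all tuples [k]. *)
Definition hit (K j a L i x : nat) : bool := Nat.leb ((x + (i * j + (K - a))) mod K) L.

Definition hits (n K j a L : nat) (k : nat -> nat) : R :=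
  sum_1to n (fun i => ind (hit K j a L i (k i))).

Definition mean (n K L : nat) : R := INR n * INR (S L) / INR K.

Lemma mean_pos n K L : (1 <= n)%nat -> (1 <= K)%nat -> 0 < mean n K L.
Proof.
  intros Hn HK. unfold mean. apply le_INR in Hn, HK. rewrite S_INR.
  pose proof (pos_INR L). simpl in *. apply Rdiv_lt_0_compat; nra.
Qed.

Lemma exp_mono x y : x <= y -> exp x <= exp y.
Proof. intros [H|H]; [left; apply exp_increasing; exact H | subst; apply Rle_refl]. Qed.

Lemma exp_pow x m : exp x ^ m = exp (INR m * x).
Proof.
  induction m as [|m IH]; simpl pow.
  - simpl. rewrite Rmult_0_l, exp_0. reflexivity.
  - rewrite IH, S_INR, <- exp_plus. f_equal. lra.
Qed.

(* A single offset [x], uniform on Z/KZ, hits an arc of [L+1] residues with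
   probability [(L+1)/K], whatever the time and the arc are. *)
Lemma coordinate_mgf K j a L i h : (L < K)%nat ->
  sum_lt K (fun x => exp (h * ind (hit K j a L i x))) = INR K + INR (S L) * (exp h - 1).
Proof.
  intros HL. unfold hit.
  rewrite (sum_lt_rotate K (fun y => exp (h * ind (Nat.leb y L)))) by lia.
  rewrite (sum_lt_ext K _ (fun y => if Nat.leb y L then exp h else 1)).
  - rewrite sum_lt_step by exact HL. rewrite minus_INR by lia. lra.
  - intros y _. unfold ind. destruct (Nat.leb y L).
    + rewrite Rmult_1_r. reflexivity.
    + rewrite Rmult_0_r, exp_0. reflexivity.
Qed.

(* Moment generating function of [hits]: the coordinates are independent, so it
   factorizes, and [1 + p (e^h - 1) <= exp (p (e^h - 1))]. *)
Lemma mgf_bound n K j a L h : (0 < K)%nat -> (L < K)%nat ->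
  tuple_sum K n (fun k => exp (h * hits n K j a L k))
  <= INR K ^ n * exp (mean n K L * (exp h - 1)).
Proof.
  intros HK HL. unfold hits.
  rewrite (tuple_sum_ext _ _ _
    (fun k => prod_1to n (fun i => (fun i x => exp (h * ind (hit K j a L i x))) i (k i))))
    by (intros; apply exp_sum_1to).
  rewrite (tuple_sum_prod K n (fun i x => exp (h * ind (hit K j a L i x)))).
  rewrite (prod_1to_ext n _ (fun _ => INR K + INR (S L) * (exp h - 1)))
    by (intros; apply coordinate_mgf; exact HL).
  rewrite prod_1to_const.
  assert (HK' : 0 < INR K) by (apply lt_0_INR; exact HK).
  set (p := INR (S L) / INR K).
  assert (Hfactor : INR K + INR (S L) * (exp h - 1) = INR K * (1 + p * (exp h - 1)))
    by (unfold p; field; lra).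
  assert (Hnonneg : 0 <= 1 + p * (exp h - 1)).
  { assert (Hp : 0 <= p <= 1).
    { unfold p. apply le_INR in HL. pose proof (pos_INR (S L)).
      split; [unfold Rdiv; apply Rmult_le_pos; [lra | left; apply Rinv_0_lt_compat; lra]|].
      apply Rmult_le_reg_r with (INR K); [exact HK'|].
      unfold Rdiv. rewrite Rmult_assoc, Rinv_l by lra. lra. }
    pose proof (exp_pos h). nra. }
  rewrite Hfactor, Rpow_mult_distr.
  replace (mean n K L * (exp h - 1)) with (INR n * (p * (exp h - 1)))
    by (unfold mean, p; field; lra).
  rewrite <- exp_pow. apply Rmult_le_compat_l; [apply pow_le; lra|].
  apply pow_incr. split; [exact Hnonneg | apply exp_ineq1_le].
Qed.

(* [e^s <= 1 + s + 2 s^2] for [s <= 1/2], since [e^s <= 1/(1 - s)]. *)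
Lemma exp_quadratic s : s <= /2 -> exp s <= 1 + s + 2 * s ^ 2.
Proof.
  intros Hs. pose proof (exp_ineq1_le (- s)) as Hlow.
  assert (Hprod : exp s * exp (- s) = 1) by (rewrite <- exp_plus, Rplus_opp_r, exp_0; reflexivity).
  pose proof (exp_pos s).
  assert (Hcubic : 1 <= (1 - s) * (1 + s + 2 * s ^ 2)) by nra.
  nra.
Qed.

Lemma chernoff n K j a L s : (0 < K)%nat -> (L < K)%nat -> s <= /2 ->
  tuple_sum K n
    (fun k => exp (s * (hits n K j a L k - mean n K L) - 2 * mean n K L * s ^ 2))
  <= INR K ^ n.
Proof.
  intros HK HL Hs. set (m := mean n K L).
  rewrite (tuple_sum_ext _ _ _
    (fun k => exp (- (s * m + 2 * m * s ^ 2)) * exp (s * hits n K j a L k)))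
    by (intros; rewrite <- exp_plus; f_equal; ring).
  rewrite tuple_sum_scal.
  assert (Hm : 0 <= m).
  { unfold m, mean. unfold Rdiv. apply Rmult_le_pos; [apply Rmult_le_pos; apply pos_INR|]. left. apply Rinv_0_lt_compat.
    apply lt_0_INR. exact HK. }
  assert (Hmgf : m * (exp s - 1) <= s * m + 2 * m * s ^ 2).
  { pose proof (exp_quadratic s Hs). nra. }
  eapply Rle_trans.
  { apply Rmult_le_compat_l; [left; apply exp_pos | apply mgf_bound; assumption]. }
  fold m. rewrite Rmult_comm, Rmult_assoc, <- exp_plus.
  rewrite <- (Rmult_1_r (INR K ^ n)) at 2.
  apply Rmult_le_compat_l; [apply pow_le, pos_INR|].
  apply Rle_trans with (exp 0); [apply exp_mono; lra | rewrite exp_0; apply Rle_refl].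
Qed.

(* [union_log K = ln (4 K^3)] is the logarithmic price of a union bound over the
   [K^3] events indexed by the time [j], the start [a] and the length [L] of an arc. *)
Definition union_log (K : nat) : R := ln (4 * INR K ^ 3).

(* The optimized tilt [h = min (1/2, sqrt (T / mu))] and the deviation radius
   [2 mu h + T / h], which is [3 sqrt (T mu)] when [mu >= 4 T] and [O(T)] otherwise. *)
Definition tilt (n K L : nat) : R :=
  if Rle_dec (4 * union_log K) (mean n K L)
  then sqrt (union_log K) / sqrt (mean n K L) else /2.

Definition dev (n K L : nat) : R := 2 * mean n K L * tilt n K L + union_log K / tilt n K L.

Lemma union_log_pos K : (1 <= K)%nat -> 0 < union_log K.
Proof.
  intros H. unfold union_log. rewrite <- ln_1. apply ln_increasing; [lra|].
  apply le_INR in H. simpl in H. assert (1 <= INR K ^ 3) by (apply pow_R1_Rle; lra). lra.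
Qed.

Lemma tilt_bounds n K L : (1 <= n)%nat -> (1 <= K)%nat -> 0 < tilt n K L <= /2.
Proof.
  intros Hn HK. pose proof (union_log_pos K HK). pose proof (mean_pos n K L Hn HK).
  unfold tilt. destruct (Rle_dec (4 * union_log K) (mean n K L)) as [Hc|Hc]; [|lra].
  assert (0 < sqrt (union_log K)) by (apply sqrt_lt_R0; lra).
  assert (0 < sqrt (mean n K L)) by (apply sqrt_lt_R0; lra).
  assert (2 * sqrt (union_log K) <= sqrt (mean n K L)).
  { rewrite <- (sqrt_square 2), <- sqrt_mult by lra. apply sqrt_le_1_alt. lra. }
  split; [apply Rdiv_lt_0_compat; lra|].
  apply Rmult_le_reg_r with (sqrt (mean n K L)); [assumption|].
  unfold Rdiv. rewrite Rmult_assoc, Rinv_l by lra. lra.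
Qed.

Lemma tail_mass n K j a L s : (1 <= n)%nat -> (1 <= K)%nat -> (L < K)%nat ->
  s = tilt n K L \/ s = - tilt n K L ->
  tuple_sum K n (fun k => exp (s * (hits n K j a L k - mean n K L) - tilt n K L * dev n K L))
  <= INR K ^ n / (4 * INR K ^ 3).
Proof.
  intros Hn HK HL Hs. pose proof (tilt_bounds n K L Hn HK) as Hh.
  set (h := tilt n K L) in *. set (m := mean n K L).
  assert (Hsq : s ^ 2 = h ^ 2) by (destruct Hs as [->| ->]; ring).
  assert (Hdev : h * dev n K L = 2 * m * s ^ 2 + union_log K)
    by (unfold dev; fold h m; rewrite Hsq; field; lra).
  rewrite (tuple_sum_ext _ _ _ (fun k => exp (- union_log K)
     * exp (s * (hits n K j a L k - m) - 2 * m * s ^ 2)))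
    by (intros; rewrite Hdev, <- exp_plus; f_equal; ring).
  rewrite tuple_sum_scal.
  assert (Hs2 : s <= /2) by (destruct Hs as [->| ->]; lra).
  pose proof (chernoff n K j a L s ltac:(lia) HL Hs2) as Hc. fold m in Hc.
  assert (HK3 : 0 < 4 * INR K ^ 3) by (apply le_INR in HK; simpl in HK; nra).
  unfold union_log. rewrite exp_Ropp, exp_ln by exact HK3.
  unfold Rdiv. rewrite Rmult_comm. apply Rmult_le_compat_r; [left; apply Rinv_0_lt_compat|]; lra.
Qed.

(* The potential of a tuple adds the exponential weights of both tails of all
   [K^3] events; a tuple of potential less than [1] avoids every tail. *)
Definition tail_pair (n K j a L : nat) (k : nat -> nat) : R :=
  exp (tilt n K L * (hits n K j a L k - mean n K L) - tilt n K L * dev n K L)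
  + exp (- tilt n K L * (hits n K j a L k - mean n K L) - tilt n K L * dev n K L).

Definition potential (n K : nat) (k : nat -> nat) : R :=
  sum_lt K (fun j => sum_lt K (fun a => sum_lt K (fun L => tail_pair n K j a L k))).

Lemma potential_mass n K : (1 <= n)%nat -> (1 <= K)%nat ->
  tuple_sum K n (potential n K) <= INR K ^ n / 2.
Proof.
  intros Hn HK.
  assert (Hbound : forall j a L, (L < K)%nat ->
    tuple_sum K n (tail_pair n K j a L) <= 2 * (INR K ^ n / (4 * INR K ^ 3))).
  { intros j a L HL. unfold tail_pair. rewrite tuple_sum_plus.
    pose proof (tail_mass n K j a L (tilt n K L) Hn HK HL (or_introl eq_refl)).
    pose proof (tail_mass n K j a L (- tilt n K L) Hn HK HL (or_intror eq_refl)). lra. }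
  unfold potential. rewrite tuple_sum_swap.
  apply Rle_trans with (sum_lt K (fun _ => sum_lt K (fun _ => sum_lt K (fun _ =>
      2 * (INR K ^ n / (4 * INR K ^ 3)))))).
  - apply sum_lt_le. intros j _. rewrite tuple_sum_swap.
    apply sum_lt_le. intros a _. rewrite tuple_sum_swap.
    apply sum_lt_le. intros L HL. apply Hbound. exact HL.
  - rewrite !sum_lt_const. apply le_INR in HK. simpl in HK. apply Req_le. field. lra.
Qed.

Definition good (n K : nat) (k : nat -> nat) : Prop :=
  forall j a L, (j < K)%nat -> (a < K)%nat -> (L < K)%nat ->
    Rabs (hits n K j a L k - mean n K L) < dev n K L.

(* Both exponential weights of every event are below the potential; a weight below
   [1] has a negative exponent, which is exactly one side of [|X - mu| < dev]. *)
Lemma good_of_potential n K k : (1 <= n)%nat -> (1 <= K)%nat -> potential n K k < 1 -> good n K k.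
Proof.
  intros Hn HK Hk j a L Hj Ha HL.
  assert (Hpos : forall j a L, 0 <= tail_pair n K j a L k).
  { intros j' a' L'. unfold tail_pair.
    pose proof (exp_pos (tilt n K L' * (hits n K j' a' L' k - mean n K L')
      - tilt n K L' * dev n K L')).
    pose proof (exp_pos (- tilt n K L' * (hits n K j' a' L' k - mean n K L')
      - tilt n K L' * dev n K L')). lra. }
  assert (Hpair : tail_pair n K j a L k < 1).
  { eapply Rle_lt_trans; [|exact Hk]. unfold potential.
    eapply Rle_trans; [|apply sum_lt_term with (x0 := j); [intros; apply sum_lt_nonneg;
      intros; apply sum_lt_nonneg; auto | exact Hj]].
    eapply Rle_trans; [|apply sum_lt_term with (x0 := a); [intros; apply sum_lt_nonneg; auto
      | exact Ha]].
    apply (sum_lt_term K (fun L => tail_pair n K j a L k)); auto. }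
  pose proof (tilt_bounds n K L Hn HK) as Hh. unfold tail_pair in Hpair.
  set (u := tilt n K L * (hits n K j a L k - mean n K L) - tilt n K L * dev n K L) in Hpair.
  set (v := - tilt n K L * (hits n K j a L k - mean n K L) - tilt n K L * dev n K L) in Hpair.
  assert (Hu : u < 0).
  { apply exp_lt_inv. rewrite exp_0. pose proof (exp_pos v). lra. }
  assert (Hv : v < 0).
  { apply exp_lt_inv. rewrite exp_0. pose proof (exp_pos u). lra. }
  unfold u, v in *. apply Rabs_def1; nra.
Qed.

(* Probabilistic method: since the average potential is below [1], some tuple of
   offsets in [0..K-1] is good. *)
Lemma good_exists n K : (1 <= n)%nat -> (1 <= K)%nat ->
  exists k, (forall i, (1 <= i <= n)%nat -> (k i < K)%nat) /\ good n K k.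
Proof.
  intros Hn HK.
  assert (Hlt : tuple_sum K n (potential n K) < tuple_sum K n (fun _ => 1)).
  { rewrite tuple_sum_const. eapply Rle_lt_trans; [apply potential_mass; assumption|].
    apply le_INR in HK. simpl in HK. assert (0 < INR K ^ n) by (apply pow_lt; lra). lra. }
  destruct (tuple_sum_exists _ _ _ _ Hlt) as [k [Hk Hpot]].
  exists k. split; [exact Hk | apply good_of_potential; assumption].
Qed.

Definition residue (K : nat) (z : Z) : nat := Z.to_nat (z mod Z.of_nat K).

Lemma hit_residue K J A i x : (1 <= K)%nat ->
  Z.of_nat ((x + (i * residue K J + (K - residue K A))) mod K)
  = ((Z.of_nat x + Z.of_nat i * J - A) mod Z.of_nat K)%Z.
Proof.
  intros HK. assert (HKz : (0 < Z.of_nat K)%Z) by lia.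
  pose proof (Z.mod_pos_bound J _ HKz). pose proof (Z.mod_pos_bound A _ HKz).
  unfold residue.
  rewrite Nat2Z.inj_mod, Nat2Z.inj_add, Nat2Z.inj_add, Nat2Z.inj_mul, Nat2Z.inj_sub by lia.
  rewrite !Z2Nat.id by lia.
  rewrite (Z.div_mod J (Z.of_nat K)) at 2 by lia.
  rewrite (Z.div_mod A (Z.of_nat K)) at 2 by lia.
  set (qJ := (J / Z.of_nat K)%Z). set (qA := (A / Z.of_nat K)%Z).
  set (rJ := (J mod Z.of_nat K)%Z). set (rA := (A mod Z.of_nat K)%Z).
  replace (Z.of_nat x + Z.of_nat i * (Z.of_nat K * qJ + rJ) - (Z.of_nat K * qA + rA))%Z
    with (Z.of_nat x + (Z.of_nat i * rJ + (Z.of_nat K - rA))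
          + (Z.of_nat i * qJ - qA - 1) * Z.of_nat K)%Z by ring.
  rewrite Z.mod_add by lia. reflexivity.
Qed.

Lemma hit_arc K J A L i x : (1 <= K)%nat ->
  hit K (residue K J) (residue K A) L i x = true ->
  exists q : Z, (A + q * Z.of_nat K <= Z.of_nat x + Z.of_nat i * J <= A + Z.of_nat L + q * Z.of_nat K)%Z.
Proof.
  intros HK Hhit. unfold hit in Hhit. apply Nat.leb_le, Nat2Z.inj_le in Hhit.
  rewrite hit_residue in Hhit by exact HK.
  set (Y := (Z.of_nat x + Z.of_nat i * J)%Z) in *.
  exists ((Y - A) / Z.of_nat K)%Z.
  pose proof (Z.div_mod (Y - A) (Z.of_nat K) ltac:(lia)).
  pose proof (Z.mod_pos_bound (Y - A) (Z.of_nat K) ltac:(lia)). lia.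
Qed.

Lemma arc_hit K J A L i x : (1 <= K)%nat -> (L < K)%nat ->
  (exists q : Z, (A + q * Z.of_nat K <= Z.of_nat x + Z.of_nat i * J <= A + Z.of_nat L + q * Z.of_nat K)%Z) ->
  hit K (residue K J) (residue K A) L i x = true.
Proof.
  intros HK HL [q Hq]. unfold hit. apply Nat.leb_le, Nat2Z.inj_le.
  rewrite hit_residue by exact HK.
  rewrite <- (Z.mod_unique (Z.of_nat x + Z.of_nat i * J - A) (Z.of_nat K) q
             (Z.of_nat x + Z.of_nat i * J - A - Z.of_nat K * q)); lia.
Qed.

Lemma scaled_point n K (k : nat -> nat) t i : (1 <= K)%nat -> (1 <= i <= n)%nat ->
  let Y := (Z.of_nat (k i) + Z.of_nat i * Int_part (t * INR K))%Z in
  IZR Y <= (INR (k i) / INR K + INR i * t) * INR K < IZR Y + INR n.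
Proof.
  intros HK Hi Y. unfold Y. rewrite plus_IZR, mult_IZR, <- !INR_IZR_INZ.
  assert (0 < INR K) by (apply lt_0_INR; lia).
  replace ((INR (k i) / INR K + INR i * t) * INR K) with (INR (k i) + INR i * (t * INR K))
    by (field; lra).
  pose proof (floor_le (t * INR K)). pose proof (floor_gt (t * INR K)).
  assert (1 <= INR i) by (change 1 with (INR 1); apply le_INR; lia).
  assert (INR i <= INR n) by (apply le_INR; lia).
  split; nra.
Qed.

Lemma sector_hit n K (k : nat -> nat) t al ga i : (1 <= K)%nat -> (1 <= i <= n)%nat -> 0 <= ga ->
  let A := (Int_part (al * INR K) - Z.of_nat n)%Z in
  let B := Int_part ((al + ga) * INR K) in
  (0 <= B - A < Z.of_nat K)%Z ->
  in_sector al ga (frac (INR (k i) / INR K + INR i * t)) = true ->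
  hit K (residue K (Int_part (t * INR K))) (residue K A) (Z.to_nat (B - A)) i (k i) = true.
Proof.
  intros HK Hi Hga A B HAB Hsec.
  apply in_sector_arc in Hsec as [m Hm]; [|exact Hga].
  pose proof (scaled_point n K k t i HK Hi) as HY. cbv zeta in HY.
  set (Y := (Z.of_nat (k i) + Z.of_nat i * Int_part (t * INR K))%Z) in HY.
  set (y := INR (k i) / INR K + INR i * t) in HY, Hm.
  assert (HKr : 0 < INR K) by (apply lt_0_INR; lia).
  assert (Hlo : (A + m * Z.of_nat K < Y + 1)%Z).
  { apply lt_IZR. unfold A. rewrite !plus_IZR, minus_IZR, mult_IZR, <- !INR_IZR_INZ.
    pose proof (floor_le (al * INR K)). nra. }
  assert (Hhi : (Y - m * Z.of_nat K <= B)%Z).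
  { apply floor_ge. rewrite minus_IZR, mult_IZR, <- INR_IZR_INZ. nra. }
  apply arc_hit; [exact HK | lia |]. exists m. rewrite Z2Nat.id by lia. fold Y. lia.
Qed.

Lemma hit_sector n K (k : nat -> nat) t al ga i : (1 <= K)%nat -> (1 <= i <= n)%nat -> 0 <= ga ->
  let A := (Int_part (al * INR K) + 1)%Z in
  let B := (Int_part ((al + ga) * INR K) - Z.of_nat n)%Z in
  (0 <= B - A)%Z ->
  hit K (residue K (Int_part (t * INR K))) (residue K A) (Z.to_nat (B - A)) i (k i) = true ->
  in_sector al ga (frac (INR (k i) / INR K + INR i * t)) = true.
Proof.
  intros HK Hi Hga A B HAB Hhit.
  apply hit_arc in Hhit as [q Hq]; [|exact HK]. rewrite Z2Nat.id in Hq by exact HAB.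
  pose proof (scaled_point n K k t i HK Hi) as HY. cbv zeta in HY.
  set (Y := (Z.of_nat (k i) + Z.of_nat i * Int_part (t * INR K))%Z) in HY, Hq.
  set (y := INR (k i) / INR K + INR i * t) in HY |- *.
  assert (HKr : 0 < INR K) by (apply lt_0_INR; lia).
  destruct Hq as [Hq1 Hq2]. replace (A + (B - A))%Z with B in Hq2 by ring.
  apply IZR_le in Hq1, Hq2. unfold A, B in Hq1, Hq2.
  rewrite !plus_IZR, mult_IZR, <- INR_IZR_INZ in Hq1.
  rewrite plus_IZR, minus_IZR, mult_IZR, <- !INR_IZR_INZ in Hq2.
  pose proof (floor_gt (al * INR K)). pose proof (floor_le ((al + ga) * INR K)).
  apply in_sector_arc; [exact Hga|]. exists q.
  split; apply Rmult_le_reg_r with (INR K); try exact HKr.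
  all: lra.
Qed.

Lemma hits_count n K j a L k :
  hits n K j a L k = INR (length (filter (fun i => hit K j a L i (k i)) (seq 1 n))).
Proof. unfold hits. rewrite count_as_sum. reflexivity. Qed.

Lemma mean_square n z : (1 <= n)%nat -> (0 <= z)%Z ->
  mean n (n * n) (Z.to_nat z) = (IZR z + 1) / INR n.
Proof.
  intros Hn Hz. unfold mean. rewrite mult_INR, S_INR, (INR_IZR_INZ (Z.to_nat z)), Z2Nat.id by exact Hz.
  apply le_INR in Hn. simpl in Hn. field. lra.
Qed.

Definition controlled (n : nat) (ga D : R) : Prop :=
  D <= 2 \/ exists L, (L < n * n)%nat /\ mean n (n * n) L <= ga * INR n + 2 /\
                      D < dev n (n * n) L + 2.

Section SectorCounts.
Variables (n : nat) (k : nat -> nat) (t al ga : R).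
Hypotheses (Hn : (2 <= n)%nat) (Hga : 0 <= ga <= 1) (Hgood : good n (n * n) k).

Let N : R := INR (N_sector al ga n (fun i => INR (k i) / INR (n * n) + INR i * t)).

Lemma sector_excess_above : controlled n ga (N - ga * INR n).
Proof.
  set (K := (n * n)%nat).
  assert (HK : (1 <= K)%nat) by (unfold K; nia).
  assert (HKr : INR K = INR n * INR n) by apply mult_INR.
  assert (Hnr : 2 <= INR n) by (apply le_INR in Hn; exact Hn).
  set (A := (Int_part (al * INR K) - Z.of_nat n)%Z).
  set (B := Int_part ((al + ga) * INR K)).
  assert (HAB0 : (A <= B)%Z).
  { unfold A, B. assert (Int_part (al * INR K) <= Int_part ((al + ga) * INR K))%Z; [|lia].
    apply floor_ge. pose proof (floor_le (al * INR K)). nra. }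
  assert (Hwidth : IZR (B - A) < ga * INR K + INR n + 1).
  { unfold A, B. rewrite !minus_IZR, <- INR_IZR_INZ.
    pose proof (floor_le ((al + ga) * INR K)). pose proof (floor_gt (al * INR K)). nra. }
  destruct (Z_lt_le_dec (B - A) (Z.of_nat K)) as [Hshort|Hlong].
  - right. set (j := residue K (Int_part (t * INR K))).
    exists (Z.to_nat (B - A)). split; [lia|].
    assert (HNhits : N <= hits n K j (residue K A) (Z.to_nat (B - A)) k).
    { unfold N. rewrite hits_count. apply le_INR, count_mono.
      intros i Hi Hsec. apply in_seq in Hi.
      apply (sector_hit n); [exact HK | lia | lra | lia | exact Hsec]. }
    assert (Hdev := Hgood j (residue K A) (Z.to_nat (B - A))).
    assert (Hres : forall z, (residue K z < K)%nat).
    { intros z. unfold residue. pose proof (Z.mod_pos_bound z (Z.of_nat K) ltac:(lia)). lia. }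
    specialize (Hdev (Hres _) (Hres _) ltac:(lia)). apply Rabs_def2 in Hdev.
    rewrite mean_square in * by lia. change (n * n)%nat with K in Hdev |- *. rewrite HKr in Hwidth.
    assert (Hmean : (IZR (B - A) + 1) / INR n <= ga * INR n + 2).
    { apply Rmult_le_reg_r with (INR n); [lra|].
      unfold Rdiv. rewrite Rmult_assoc, Rinv_l by lra. nra. }
    split; [exact Hmean | lra].
  - left. apply IZR_le in Hlong. rewrite <- INR_IZR_INZ, HKr in Hlong.
    assert (HNn : N <= INR n).
    { unfold N. apply le_INR. rewrite <- (length_seq n 1) at 2. apply count_le. }
    rewrite HKr in Hwidth. nra.
Qed.

Lemma sector_excess_below : controlled n ga (ga * INR n - N).
Proof.
  set (K := (n * n)%nat).
  assert (HK : (1 <= K)%nat) by (unfold K; nia).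
  assert (HKr : INR K = INR n * INR n) by apply mult_INR.
  assert (Hnr : 2 <= INR n) by (apply le_INR in Hn; exact Hn).
  set (A := (Int_part (al * INR K) + 1)%Z).
  set (B := (Int_part ((al + ga) * INR K) - Z.of_nat n)%Z).
  assert (Hwidth : ga * INR K - INR n - 2 < IZR (B - A) < ga * INR K - INR n).
  { unfold A, B. rewrite !minus_IZR, plus_IZR, <- INR_IZR_INZ.
    pose proof (floor_le ((al + ga) * INR K)). pose proof (floor_gt ((al + ga) * INR K)).
    pose proof (floor_le (al * INR K)). pose proof (floor_gt (al * INR K)). nra. }
  rewrite HKr in Hwidth. assert (HN0 : 0 <= N) by apply pos_INR.
  destruct (Z_lt_le_dec (B - A) 0) as [Hempty|Hnonempty].
  - left. assert (Hle : (B - A <= -1)%Z) by lia. apply IZR_le in Hle. nra.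
  - right. set (j := residue K (Int_part (t * INR K))).
    assert (Hshort : (B - A < Z.of_nat K)%Z).
    { apply lt_IZR. rewrite <- INR_IZR_INZ, HKr. nra. }
    exists (Z.to_nat (B - A)). split; [lia|].
    assert (HhitsN : hits n K j (residue K A) (Z.to_nat (B - A)) k <= N).
    { unfold N. rewrite hits_count. apply le_INR, count_mono.
      intros i Hi Hhit. apply in_seq in Hi.
      apply (hit_sector n K k t al ga i); [exact HK | lia | lra | lia | exact Hhit]. }
    assert (Hdev := Hgood j (residue K A) (Z.to_nat (B - A))).
    assert (Hres : forall z, (residue K z < K)%nat).
    { intros z. unfold residue. pose proof (Z.mod_pos_bound z (Z.of_nat K) ltac:(lia)). lia. }
    specialize (Hdev (Hres _) (Hres _) ltac:(lia)). apply Rabs_def2 in Hdev.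
    rewrite mean_square in * by lia. change (n * n)%nat with K in Hdev |- *.
    assert (Hmean : ga * INR n - 2 <= (IZR (B - A) + 1) / INR n <= ga * INR n + 2).
    { split; apply Rmult_le_reg_r with (INR n); try lra;
        unfold Rdiv; rewrite Rmult_assoc, Rinv_l by lra; nra. }
    split; [apply Hmean | lra].
Qed.

End SectorCounts.

Lemma ln_mono x y : 0 < x -> x <= y -> ln x <= ln y.
Proof. intros Hx [H|H]; [left; apply ln_increasing; assumption | subst; apply Rle_refl]. Qed.

Lemma ln2_bounds : 0 < ln 2 < 1.
Proof.
  split.
  - rewrite <- ln_1. apply ln_increasing; lra.
  - rewrite <- (ln_exp 1). apply ln_increasing; [lra|]. pose proof (exp_ineq1 1). lra.
Qed.

Lemma pow2_ge n : INR n <= 2 ^ n.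
Proof.
  induction n as [|n IH]; [simpl; lra|].
  rewrite S_INR. simpl. assert (1 <= 2 ^ n) by (apply pow_R1_Rle; lra). lra.
Qed.

Lemma log2_bounds n : (2 <= n)%nat ->
  1 <= log2 (INR n) /\ ln (INR n) <= log2 (INR n) /\ log2 (INR n) <= INR n.
Proof.
  intros Hn. assert (Hnr : 2 <= INR n) by (apply le_INR in Hn; exact Hn).
  pose proof ln2_bounds. assert (ln 2 <= ln (INR n)) by (apply ln_mono; lra).
  assert (Hpow : ln (INR n) <= INR n * ln 2).
  { rewrite <- ln_pow by lra. apply ln_mono; [lra | apply pow2_ge]. }
  unfold log2. repeat split; apply Rmult_le_reg_r with (ln 2); try lra;
    unfold Rdiv; rewrite Rmult_assoc, Rinv_l by lra; rewrite Rmult_1_r; try nra.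
Qed.

Lemma union_log_square n : (2 <= n)%nat -> union_log (n * n) <= 8 * log2 (INR n).
Proof.
  intros Hn. assert (Hnr : 2 <= INR n) by (apply le_INR in Hn; exact Hn).
  destruct (log2_bounds n Hn) as [_ [Hln _]]. unfold union_log. rewrite mult_INR.
  apply Rle_trans with (ln (INR n ^ 8)).
  - assert (0 < (INR n * INR n) ^ 3) by (apply pow_lt; nra).
    apply ln_mono; [lra|].
    replace (INR n ^ 8) with ((INR n * INR n) * (INR n * INR n) ^ 3) by ring.
    apply Rmult_le_compat_r; nra.
  - rewrite ln_pow by lra. simpl INR. lra.
Qed.

Lemma dev_bound n L ga : (2 <= n)%nat -> 0 <= ga -> mean n (n * n) L <= ga * INR n + 2 ->
  dev n (n * n) L <= 9 * sqrt (INR n * ga * log2 (INR n)) + 48 * log2 (INR n).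
Proof.
  intros Hn Hga Hmean. assert (Hnr : 2 <= INR n) by (apply le_INR in Hn; exact Hn).
  destruct (log2_bounds n Hn) as [Hl1 _]. pose proof (union_log_square n Hn) as HT.
  assert (HK : (1 <= n * n)%nat) by nia.
  pose proof (union_log_pos _ HK) as HT0. pose proof (mean_pos n (n * n) L ltac:(lia) HK) as Hm0.
  set (l := log2 (INR n)) in *. set (T := union_log (n * n)) in *.
  set (m := mean n (n * n) L) in *. set (S := sqrt (INR n * ga * l)).
  assert (HS : S * S = INR n * ga * l) by (apply sqrt_sqrt; apply Rmult_le_pos; nra).
  assert (HS0 : 0 <= S) by apply sqrt_pos.
  unfold dev, tilt. fold T m. destruct (Rle_dec (4 * T) m) as [Hbig|Hsmall].
  - set (r := sqrt T). set (q := sqrt m).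
    assert (Hr : r * r = T) by (apply sqrt_sqrt; lra).
    assert (Hq : q * q = m) by (apply sqrt_sqrt; lra).
    assert (0 < r) by (apply sqrt_lt_R0; lra). assert (0 < q) by (apply sqrt_lt_R0; lra).
    replace (2 * m * (r / q) + T / (r / q)) with (3 * (r * q))
      by (rewrite <- Hr, <- Hq; field; lra).
    assert ((r * q) * (r * q) <= (3 * S + 4 * l) * (3 * S + 4 * l)).
    { replace ((r * q) * (r * q)) with (T * m) by (rewrite <- Hr, <- Hq; ring). nra. }
    assert (r * q <= 3 * S + 4 * l) by nra. lra.
  - replace (T / / 2) with (2 * T) by field. lra.
Qed.

Lemma controlled_bound n ga D : (2 <= n)%nat -> 0 <= ga -> controlled n ga D ->
  D <= 50 * (sqrt (INR n * ga * log2 (INR n)) + log2 (INR n)).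
Proof.
  intros Hn Hga Hc. destruct (log2_bounds n Hn) as [Hl1 _].
  pose proof (sqrt_pos (INR n * ga * log2 (INR n))).
  destruct Hc as [Hsmall | [L [_ [Hmean HD]]]]; [lra|].
  pose proof (dev_bound n L ga Hn Hga Hmean). lra.
Qed.

Lemma sector_deviation n k t al ga : (2 <= n)%nat -> 0 <= ga <= 1 -> good n (n * n) k ->
  Rabs (INR (N_sector al ga n (fun i => INR (k i) / INR (n * n) + INR i * t)) - ga * INR n)
  <= 50 * (sqrt (INR n * ga * log2 (INR n)) + log2 (INR n)).
Proof.
  intros Hn Hga Hgood. apply Rabs_le. split.
  - apply Ropp_le_cancel. rewrite Ropp_involutive, Ropp_minus_distr.
    apply controlled_bound; [exact Hn | lra | apply sector_excess_below; assumption].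
  - apply controlled_bound; [exact Hn | lra | apply sector_excess_above; assumption].
Qed.

Lemma interval_in_sector a b y : 0 <= a -> a <= b -> b <= 1 ->
  Rleb a (frac y) && Rleb (frac y) b = true -> in_sector a (b - a) (frac y) = true.
Proof.
  intros Ha Hab Hb H. apply andb_prop in H as [H1 H2]. apply Rleb_true in H1, H2.
  apply in_sector_arc; [lra|]. exists (Int_part y). unfold frac in *. lra.
Qed.

Lemma sector_in_interval a b y : 0 <= a -> a <= b -> b <= 1 ->
  in_sector a (b - a) (frac y) = true ->
  Rleb a (frac y) && Rleb (frac y) b = true \/ in_sector 0 0 (frac y) = true.
Proof.
  intros Ha Hab Hb H. apply in_sector_arc in H as [m Hm]; [|lra].
  destruct (Rlt_le_dec (y - IZR m) 1) as [Hl|Hl].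
  - left. assert (E : Int_part y = m) by (apply floor_unique; lra).
    unfold frac. rewrite E. apply andb_true_intro; split; apply Rleb_true; lra.
  - right. apply in_sector_arc; [lra|]. exists (m + 1)%Z. rewrite plus_IZR. lra.
Qed.

(* Uniform sector discrepancy [W] bounds the bias by [2 W]: an interval count is
   squeezed between a sector count and that count minus the points at [0]. *)
Lemma bias_of_sectors n r W :
  (forall al ga, 0 <= ga <= 1 -> Rabs (INR (N_sector al ga n r) - ga * INR n) <= W) ->
  bias_le n r (2 * W).
Proof.
  intros Hsec a b Ha Hab Hb.
  set (X := INR (N_interval a b n r)).
  set (Y := INR (N_sector a (b - a) n r)).
  set (Z := INR (N_sector 0 0 n r)).
  assert (HXY : X <= Y).
  { apply le_INR, count_mono. intros i _ Hi. apply interval_in_sector; assumption. }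
  assert (HYXZ : Y <= X + Z).
  { unfold X, Y, Z. rewrite <- plus_INR. apply le_INR, count_or.
    intros i _ Hi. apply sector_in_interval; assumption. }
  pose proof (Hsec a (b - a) ltac:(lra)) as HY. fold Y in HY.
  pose proof (Hsec 0 0 ltac:(lra)) as HZ. fold Z in HZ.
  rewrite Rmult_0_l, Rminus_0_r, Rabs_pos_eq in HZ by apply pos_INR.
  pose proof (Rle_abs (Y - (b - a) * INR n)).
  pose proof (Rle_abs (- (Y - (b - a) * INR n))). rewrite Rabs_Ropp in *.
  apply Rabs_le. lra.
Qed.

Theorem theorem4p1 :
  exists C : R, 0 < C /\
  exists C' : R, 0 < C' /\
  forall n : nat, (2 <= n)%nat ->
    exists s : nat -> R,
      (forall i : nat, (1 <= i <= n)%nat -> 0 <= s i < 1) /\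
      (forall t gamma alpha : R, 0 <= gamma <= 1 ->
         Rabs (INR (N_sector alpha gamma n (fun i => s i + INR i * t)) - gamma * INR n)
           <= C * (sqrt (INR n * gamma * log2 (INR n)) + log2 (INR n))) /\
      (forall t : R, bias_le n (fun i => s i + INR i * t) (C' * sqrt (INR n * log2 (INR n)))).
Proof.
  exists 50. split; [lra|]. exists 200. split; [lra|].
  intros n Hn. assert (HK : (1 <= n * n)%nat) by nia.
  destruct (good_exists n (n * n) ltac:(lia) HK) as [k [Hk Hgood]].
  exists (fun i => INR (k i) / INR (n * n)). split; [|split].
  - intros i Hi. specialize (Hk i Hi). apply lt_INR in Hk.
    assert (0 < INR (n * n)) by (apply lt_0_INR; lia). pose proof (pos_INR (k i)).
    split; [apply Rmult_le_pos; [lra | left; apply Rinv_0_lt_compat; lra]|].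
    apply Rmult_lt_reg_r with (INR (n * n)); [lra|].
    unfold Rdiv. rewrite Rmult_assoc, Rinv_l; lra.
  - intros t ga al Hga. apply sector_deviation; assumption.
  - intros t. replace (200 * sqrt (INR n * log2 (INR n)))
      with (2 * (100 * sqrt (INR n * log2 (INR n)))) by ring.
    apply bias_of_sectors. intros al ga Hga.
    eapply Rle_trans; [apply sector_deviation; assumption|].
    destruct (log2_bounds n Hn) as [Hl1 [_ Hln]].
    assert (Hnr : 2 <= INR n) by (apply le_INR in Hn; exact Hn).
    assert (sqrt (INR n * ga * log2 (INR n)) <= sqrt (INR n * log2 (INR n)))
      by (apply sqrt_le_1_alt; assert (0 <= INR n * log2 (INR n)) by nra; nra).
    assert (log2 (INR n) <= sqrt (INR n * log2 (INR n))).
    { rewrite <- (sqrt_square (log2 (INR n))) at 1 by lra. apply sqrt_le_1_alt. nra. }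
    lra.
Qed.
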